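(* Let $H=(V,F)$ be a finite hypergraph with directed edge set $\vec E$. Let $(r_i)_{i\in V}$ be positive integers and, for each $\alpha\in F$ and distinct $i,j\in\alpha$, let $u^\alpha_{i\to j}\in\mathbb{C}^{r_j\times r_i}$. Put $r_e=r_{t(e)}$ and $u_{e'\rightharpoonup e}=u^{s(e)}_{t(e')\to t(e)}$, and let $\mathcal M(\boldsymbol u)$ be the operator on $\bigoplus_{e\in\vec E}\mathbb{C}^{r_e}$ given by $(\mathcal M(\boldsymbol u)f)(e)=\sum_{e':e'\rightharpoonup e}u_{e'\rightharpoonup e}f(e')$. For $\alpha=\{i_1,\dots,i_{d_\alpha}\}\in F$ let $U_\alpha$ be the block matrix with blocks indexed by $\alpha\times\alpha$ whose $(i,i)$ block is $I_{r_i}$ and whose $(i,j)$ block ($i\ne j$) is $u^\alpha_{j\to i}$; assume each $U_\alpha$ is invertible and write $W_\alpha=U_\alpha^{-1}$, with $(i,j)$ block denoted $w^\alpha_{j\to i}\in\mathbb{C}^{r_i\times r_j}$ (including $i=j$). Define linear operators $\mathcal D,\mathcal W$ on $\bigoplus_{i\in V}\mathbb{C}^{r_i}$ by $$(\mathcal Dg)(i)=d_i\,g(i),\qquad (\mathcal Wg)(i)=\sum_{\substack{e,e'\in\vec E\\ t(e)=i,\ s(e)=s(e')}}w^{s(e)}_{t(e')\to i}\,g(t(e')).$$ Then, with $r_V=\sum_{i\in V}r_i$, $$\zeta_H(\boldsymbol u)^{-1}=\det(I-\mathcal M(\boldsymbol u))=\det\big(I_{r_V}-\mathcal D+\mathcal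 W\big)\prod_{\alpha\in F}\det U_\alpha .$$
   Context: A finite hypergraph $H=(V,F)$: $V$ finite, $F$ a finite set of nonempty subsets of $V$; $d_i=|\{\alpha\in F: i\in\alpha\}|$, $d_\alpha=|\alpha|$. Directed edges $\vec E=\{(\alpha\to i): i\in\alpha\in F\}$ with $s(\alpha\to i)=\alpha$, $t(\alpha\to i)=i$. Write $e'\rightharpoonup e$ if $t(e')\in s(e)$, $t(e')\ne t(e)$, $s(e')\ne s(e)$. Closed geodesics are sequences $(e_1,\dots,e_k)$ with $e_l\rightharpoonup e_{l+1}$ cyclically; prime cycles are cyclic-permutation classes of closed geodesics that are not $m$-fold repetitions ($m\ge2$) of shorter ones; $\pi(e_1,\dots,e_k)=u_{e_k\rightharpoonup e_1}\cdots u_{e_1\rightharpoonup e_2}$; the graph zeta function is $\zeta_H(\boldsymbol u)=\prod_{\mathfrak p}\det(I-\pi(\mathfrak p))^{-1}$, its reciprocal being understood as the formal power series $\det(I-\mathcal M(\boldsymbol u))$. *)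

From HB Require Import structures.
From mathcomp Require Import all_boot all_order all_algebra.
From mathcomp Require Import complex.
From mathcomp Require Import reals.
Set Implicit Arguments. Unset Strict Implicit. Unset Printing Implicit Defensive.
Import Order.TTheory GRing.Theory Num.Theory.
Local Open Scope ring_scope.

(* Determinant of a square matrix indexed by an arbitrary finite type T
   (transported to 'M_#|T| along the canonical enumeration of T;
    the value does not depend on the ordering). *)
Definition fmx (R : nzRingType) (T : finType) (A : T -> T -> R) : 'M[R]_#|T| :=
  \matrix_(i < #|T|, j < #|T|) A (enum_val i) (enum_val j).
Definition fdet (R : comNzRingType) (T : finType) (A : T -> T -> R) : R :=
  \det (fmx A).

Section Hyper.
Variables (V : finType) (F : {set {set V}}).

Definition dedgeP (p : {set V} * V) : bool := (p.1 \in F) && (p.2 \in p.1).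
Definition dedge : finType := {p : {set V} * V | dedgeP p}.
Definition src (e : dedge) : {set V} := (val e).1.
Definition tgt (e : dedge) : V := (val e).2.

Definition follows (e' e : dedge) : bool :=
  [&& tgt e' \in src e, tgt e' != tgt e & src e' != src e].

Definition vdeg (i : V) : nat := #|[set a in F | i \in a]|.

Variables (R : realType) (r : V -> nat)
          (u : forall (a : {set V}) (i j : V), 'M[R[i]]_(r j, r i)).
Local Notation C := R[i].

(* index set of  (+)_{e in E} C^{r_e} *)
Definition Eidx : finType := {e : dedge & 'I_(r (tgt e))}.
(* index set of  (+)_{i in V} C^{r_i} *)
Definition Vidx : finType := {i : V & 'I_(r i)}.

Definition Mop (x y : Eidx) : C :=
  let e := tag x in let e' := tag y in
  if follows e' e then (u (src e) (tgt e') (tgt e)) (tagged x) (tagged y) else 0.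

Definition idmx_op (T : finType) (x y : T) : C := (x == y)%:R.

(* index set of the block matrix U_alpha *)
Definition Aidx (a : {set V}) : finType := {x : Vidx | tag x \in a}.

Definition Uop (a : {set V}) (x y : Aidx a) : C :=
  let i := tag (val x) in let j := tag (val y) in
  if i == j then (val (tagged (val x)) == val (tagged (val y)))%:R
  else (u a j i) (tagged (val x)) (tagged (val y)).

Definition Umx (a : {set V}) : 'M[C]_#|Aidx a| := fmx (@Uop a).

Definition wblk (a : {set V}) (i j : V) (p : 'I_(r i)) (q : 'I_(r j)) : C :=
  match @insub _ (fun x : Vidx => tag x \in a) _ (Tagged (fun k => 'I_(r k)) p),
        @insub _ (fun x : Vidx => tag x \in a) _ (Tagged (fun k => 'I_(r k)) q) with
  | Some x, Some y => (invmx (Umx a)) (enum_rank x) (enum_rank y)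
  | _, _ => 0
  end.

Definition Dop (x y : Vidx) : C := (x == y)%:R * (vdeg (tag x))%:R.

Definition Wop (x y : Vidx) : C :=
  \sum_(e : dedge | tgt e == tag x)
   \sum_(e' : dedge | (src e' == src e) && (tgt e' == tag y))
      wblk (src e) (tagged x) (tagged y).

End Hyper.

From HB Require Import structures.
From mathcomp Require Import all_boot all_order all_algebra.
From mathcomp Require Import fingroup perm complex reals.
Set Implicit Arguments. Unset Strict Implicit. Unset Printing Implicit Defensive.
Import Order.TTheory GRing.Theory Num.Theory.
Local Open Scope ring_scope.

(* Index the space of M(u) by pairs z = (e, p), p < r_(t e), and let S be the
   0/1 matrix of the map z |-> (t e, p) onto the index set of D and W.  With U
   the block-diagonal matrix carrying U_a on the edges of source a, one has
   M(u) = (U - 1)(S S^T - 1), S^T S = D, S^T U^-1 S = W and det U = prod det U_a.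
   Since 1 - (U - 1)(S S^T - 1) = U (1 - (1 - U^-1) S S^T), Sylvester's identity
   det (1 - A B) = det (1 - B A) turns its determinant into
   det U * det (1 - S^T S + S^T U^-1 S). *)

Section FinTypeMatrices.
Variable R : comNzRingType.

Definition fmxr (T1 T2 : finType) (A : T1 -> T2 -> R) : 'M[R]_(#|T1|, #|T2|) :=
  \matrix_(i < #|T1|, j < #|T2|) A (enum_val i) (enum_val j).

Lemma eq_fmxr (T1 T2 : finType) (A B : T1 -> T2 -> R) :
  (forall x y, A x y = B x y) -> fmxr A = fmxr B.
Proof. by move=> eqAB; apply/matrixP => i j; rewrite !mxE eqAB. Qed.

Lemma fmxr_mulmx (T1 T2 T3 : finType) (A : T1 -> T2 -> R) (B : T2 -> T3 -> R) :
  fmxr (fun x y => \sum_z A x z * B z y) = fmxr A *m fmxr B.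
Proof.
apply/matrixP => i j; rewrite !mxE (big_enum_val (A := T2)) /=.
by apply: eq_bigr => k _; rewrite !mxE.
Qed.

Lemma fmxrD (T1 T2 : finType) (A B : T1 -> T2 -> R) :
  fmxr (fun x y => A x y + B x y) = fmxr A + fmxr B.
Proof. by apply/matrixP => i j; rewrite !mxE. Qed.

Lemma fmxrB (T1 T2 : finType) (A B : T1 -> T2 -> R) :
  fmxr (fun x y => A x y - B x y) = fmxr A - fmxr B.
Proof. by apply/matrixP => i j; rewrite !mxE. Qed.

Lemma fmxr_tr (T1 T2 : finType) (A : T1 -> T2 -> R) :
  fmxr (fun y x => A x y) = (fmxr A)^T.
Proof. by apply/matrixP => i j; rewrite !mxE. Qed.

Lemma fmxr_delta (T : finType) : fmxr (fun x y : T => (x == y)%:R) = 1%:M.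
Proof. by apply/matrixP => i j; rewrite !mxE (inj_eq enum_val_inj). Qed.

Lemma sum_delta (T : finType) (a : T) (f : T -> R) : \sum_t (a == t)%:R * f t = f a.
Proof.
rewrite (bigD1 a) //= eqxx mul1r big1 ?addr0 // => t /negbTE.
by rewrite eq_sym => ->; rewrite mul0r.
Qed.

Lemma fdetE (T : finType) (A : T -> T -> R) : fdet A = \det (fmxr A).
Proof. by []. Qed.

End FinTypeMatrices.

Lemma sum_reindex_onto (M : nmodType) (I J : finType) (P : pred I) (g : J -> I)
    (f : I -> M) :
  injective g -> (forall j, P (g j)) -> (forall i, P i -> exists j, i = g j) ->
  \sum_(i | P i) f i = \sum_j f (g j).
Proof.
move=> inj_g gP g_onto.
transitivity (\sum_(j in [set: J]) f (g j)); last by apply: eq_bigl => j; rewrite inE.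
rewrite -(big_imset (h := g) (A := [set: J]) f); last by move=> ? ? _ _; exact: inj_g.
apply: eq_bigl => i; apply/idP/imsetP => [/g_onto [j ->]|[j _ ->] //].
by exists j; rewrite ?inE.
Qed.

Section Determinants.
Variable R : comNzRingType.

Lemma det_1B_mulmxC m n (A : 'M[R]_(m, n)) (B : 'M[R]_(n, m)) :
  \det (1%:M - A *m B) = \det (1%:M - B *m A).
Proof.
have lowerE : block_mx 1%:M A B 1%:M =
    block_mx 1%:M 0 B 1%:M *m block_mx 1%:M A 0 (1%:M - B *m A).
  by rewrite mulmx_block !(mul1mx, mul0mx, mulmx0, mulmx1, addr0, add0r) addrC subrK.
have upperE : block_mx 1%:M A B 1%:M =
    block_mx 1%:M A 0 1%:M *m block_mx (1%:M - A *m B) 0 B 1%:M.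
  by rewrite mulmx_block !(mul1mx, mul0mx, mulmx0, mulmx1, addr0, add0r) subrK.
have := congr1 determinant upperE; rewrite lowerE !det_mulmx.
by rewrite det_lblock det_ublock det_lblock det_ublock !det1 !(mul1r, mulr1) => ->.
Qed.

Lemma det_1B_mulmx_factor m n (U W : 'M[R]_n) (S : 'M[R]_(n, m)) (T : 'M[R]_(m, n)) :
  U *m W = 1%:M ->
  \det (1%:M - (U - 1%:M) *m (S *m T - 1%:M))
    = \det (1%:M - T *m S + T *m (W *m S)) * \det U.
Proof.
move=> UW1.
have -> : 1%:M - (U - 1%:M) *m (S *m T - 1%:M) = U *m (1%:M - ((1%:M - W) *m S) *m T).
  rewrite [in RHS]mulmxBr [in RHS]mulmx1 !mulmxA [U *m (_ - _)]mulmxBr mulmx1 UW1.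
  rewrite -mulmxA [(_ - 1%:M) *m (_ - 1%:M)]mulmxBr mulmx1.
  by rewrite opprB addrA [1%:M + _]addrC subrK.
rewrite det_mulmx mulrC det_1B_mulmxC mulmxA [T *m (_ - _)]mulmxBr mulmx1.
by rewrite mulmxBl -mulmxA opprB addrA addrAC.
Qed.

Lemma det_reindex n (A : 'M[R]_n) (h : 'I_n -> 'I_n) :
  injective h -> \det (\matrix_(i, j) A (h i) (h j)) = \det A.
Proof.
move=> inj_h; pose s := perm inj_h.
have -> : \matrix_(i, j) A (h i) (h j) = perm_mx s *m A *m perm_mx s^-1.
  by rewrite -row_permE -col_permE; apply/matrixP => i j; rewrite !mxE !permE.
by rewrite !det_mulmx !det_perm odd_permV mulrC mulrA -signr_addb addbb mul1r.
Qed.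

End Determinants.

Section DeterminantOnSubset.
Variables (R : comNzRingType) (T : finType).

Definition det_on (P : {set T}) (A : T -> T -> R) : R :=
  \det (\matrix_(i < #|P|, j < #|P|) A (enum_val i) (enum_val j)).

Lemma det_on_enum (P : {set T}) (A : T -> T -> R) n (g : 'I_n -> T) :
  injective g -> (forall i, g i \in P) -> (forall x, x \in P -> exists i, x = g i) ->
  det_on P A = \det (\matrix_(i, j) A (g i) (g j)).
Proof.
move=> inj_g gP g_onto.
have cardP : #|P| = n.
  have -> : P = [set g i | i in 'I_n].
    apply/setP => x; apply/idP/imsetP => [/g_onto [i ->]|[i _ ->]]; last exact: gP.
    by exists i.
  by rewrite card_imset // card_ord.
subst n; pose h i := enum_rank_in (gP i) (g i).
have hE i : enum_val (h i) = g i by rewrite /h enum_rankK_in ?gP.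
have inj_h : injective h by move=> i j eq_hij; apply: inj_g; rewrite -hE eq_hij hE.
rewrite /det_on -(det_reindex _ inj_h); congr (\det _); apply/matrixP => i j.
by rewrite !mxE !hE.
Qed.

Lemma fdet_det_on (A : T -> T -> R) : fdet A = det_on [set: T] A.
Proof.
rewrite (@det_on_enum _ _ _ (fun i : 'I_#|T| => enum_val i)) //.
  by move=> i j /enum_val_inj.
by move=> x _; exists (enum_rank x); rewrite enum_rankK.
Qed.

Lemma det_on_set0 (A : T -> T -> R) : det_on set0 A = 1.
Proof. by rewrite /det_on; move: (\matrix_(i, j) _); rewrite cards0; exact: det_mx00. Qed.

Lemma det_on_ublock (Q P : {set T}) (A : T -> T -> R) :
  (forall x y, x \in Q :\: P -> y \in Q :&: P -> A x y = 0) ->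
  det_on Q A = det_on (Q :&: P) A * det_on (Q :\: P) A.
Proof.
move=> A0.
pose g' (k : 'I_#|Q :&: P| + 'I_#|Q :\: P|) : T :=
  match k with inl i => enum_val i | inr j => enum_val j end.
pose g k := g' (split k).
have g'P k : g' k \in Q.
  by case: k => i /=; have := enum_valP i; rewrite !inE => /andP[].
have inj_g' : injective g'.
  case=> i [] j /= eq_ij; rewrite ?(enum_val_inj eq_ij) //;
  by have := enum_valP i; have := enum_valP j; rewrite -eq_ij !inE;
     case: (enum_val i \in P); rewrite ?andbF.
rewrite (@det_on_enum _ _ _ g).
- rewrite /det_on -(det_ublock _
    (\matrix_(i < #|Q :&: P|, j < #|Q :\: P|) A (enum_val i) (enum_val j))).
  congr (\det _); apply/matrixP => i j; rewrite -(splitK i) -(splitK j) /g.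
  case: (split i) => i'; case: (split j) => j';
    rewrite ?block_mxEul ?block_mxEur ?block_mxEdl ?block_mxEdr !mxE !unsplitK //=.
  by apply: A0; exact: enum_valP.
- by move=> i j /inj_g' /(can_inj splitK).
- by move=> i; exact: g'P.
- move=> x xQ; case xP: (x \in P).
  + have xQP : x \in Q :&: P by rewrite inE xQ xP.
    by exists (unsplit (inl (enum_rank_in xQP x))); rewrite /g unsplitK /= enum_rankK_in.
  + have xQP : x \in Q :\: P by rewrite inE xQ xP.
    by exists (unsplit (inr (enum_rank_in xQP x))); rewrite /g unsplitK /= enum_rankK_in.
Qed.

Lemma det_on_blockdiag (K : finType) (c : T -> K) (A : T -> T -> R) (S : {set K}) :
  (forall x y, c x != c y -> A x y = 0) ->
  det_on (c @^-1: S) A = \prod_(k in S) det_on (c @^-1: [set k]) A.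
Proof.
move=> A0; elim: {S}_.+1 {-2}S (ltnSn #|S|) => // n IH S ltSn.
have [->|[k kS]] := set_0Vmem S; first by rewrite big_set0 preimset0 det_on_set0.
rewrite (bigD1 k) //= (det_on_ublock (P := c @^-1: [set k])); last first.
  by move=> x y; rewrite !inE => /andP[xk _] /andP[_ /eqP yk]; apply: A0; rewrite yk.
rewrite -preimsetI -preimsetD (setIidPr _) ?sub1set // (IH (S :\ k)); last first.
  by move: ltSn; rewrite (cardsD1 k S) kS.
by congr (_ * _); apply: eq_bigl => i; rewrite !inE andbC.
Qed.

End DeterminantOnSubset.

Section Hypergraph.
Variables (V : finType) (F : {set {set V}}) (R : realType) (r : V -> nat)
  (u : forall (a : {set V}) (k l : V), 'M[R[i]]_(r l, r k)).
Local Notation C := R[i].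
Local Notation D := (dedge F).
Local Notation E := (Eidx F r).
Local Notation Vx := (Vidx r).

Lemma dedge_eq (e1 e2 : D) : src e1 = src e2 -> tgt e1 = tgt e2 -> e1 = e2.
Proof.
move=> eq_src eq_tgt; apply: val_inj; move: eq_src eq_tgt; rewrite /src /tgt.
by case: (val e1) => a i; case: (val e2) => b j /= -> ->.
Qed.

Lemma src_in_F (e : D) : src e \in F.
Proof. by case/andP: (valP e). Qed.

Lemma tgt_in_src (e : D) : tgt e \in src e.
Proof. by case/andP: (valP e). Qed.

Lemma card_dedge_tgt (i : V) : #|[set e : D | tgt e == i]| = vdeg F i.
Proof.
rewrite /vdeg; have -> : [set a in F | i \in a] = (@src _ F) @: [set e : D | tgt e == i].
  apply/setP => a; rewrite !inE; apply/andP/imsetP => [[aF ia]|[e]].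
    have ai : dedgeP F (a, i) by rewrite /dedgeP /= aF ia.
    by exists (exist _ (a, i) ai); rewrite // inE.
  by rewrite inE => /eqP <- ->; rewrite src_in_F tgt_in_src.
rewrite card_in_imset // => e1 e2; rewrite !inE => /eqP t1 /eqP t2 eq_src.
by apply: dedge_eq; rewrite // t1 t2.
Qed.

Lemma sum_dedge_src_tgt (a : {set V}) (i : V) : a \in F ->
  \sum_(e : D) (tgt e == i)%:R * (src e == a)%:R = (i \in a)%:R :> C.
Proof.
move=> aF; have [ia|ia] := boolP (i \in a); last first.
  rewrite big1 // => e _; case: (tgt e =P i) => [ti|]; last by rewrite mul0r.
  case: (src e =P a) => [sa|]; last by rewrite mulr0.
  by have := tgt_in_src e; rewrite ti sa (negbTE ia).
have ai : dedgeP F (a, i) by rewrite /dedgeP /= aF ia.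
rewrite (bigD1 (exist _ (a, i) ai)) //= !eqxx mulr1 big1 ?addr0 // => e ne.
case: (tgt e =P i) => [ti|]; last by rewrite mul0r.
case: (src e =P a) => [sa|]; last by rewrite mulr0.
by case/eqP: ne; apply: dedge_eq.
Qed.

Definition esrc (z : E) : {set V} := src (tag z).
Definition etgt (z : E) : V := tgt (tag z).
Definition evtx (z : E) : Vx := Tagged (fun i => 'I_(r i)) (tagged z).

Lemma Eidx_eq (z1 z2 : E) : esrc z1 = esrc z2 -> evtx z1 = evtx z2 -> z1 = z2.
Proof.
case: z1 => e1 p1; case: z2 => e2 p2; rewrite /esrc /evtx /= => eq_src eq_vtx.
have := dedge_eq eq_src (congr1 tag eq_vtx) => /= eq_e; subst e2.
by rewrite (eq_from_Tagged eq_vtx).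
Qed.

Lemma sum_Eidx (f : E -> C) :
  \sum_(z : E) f z = \sum_(e : D) \sum_(p : 'I_(r (tgt e))) f (Tagged _ p).
Proof.
symmetry; rewrite (sig_big_dep predT (fun _ => predT)
  (fun e (p : 'I_(r (tgt e))) => f (Tagged (fun e => 'I_(r (tgt e))) p))) /=.
by apply: eq_bigr => -[e p].
Qed.

Lemma sum_delta_Vidx (k : V) (x : Vx) (f : 'I_(r k) -> C) (c : C) :
  (forall p, Tagged (fun i => 'I_(r i)) p = x -> f p = c) ->
  \sum_(p : 'I_(r k)) (Tagged (fun i => 'I_(r i)) p == x)%:R * f p
    = (k == tag x)%:R * c.
Proof.
case: x => i q /= fE; have [eq_ki|nki] := eqVneq k i.
  subst k; rewrite (bigD1 q) //= eqxx mul1r (fE q) // mul1r big1 ?addr0 // => p /negbTE.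
  by rewrite eq_Tagged /= => ->; rewrite mul0r.
rewrite mul0r big1 // => p _; case: eqP => [eq_pq|]; last by rewrite mul0r.
by case/eqP: nki; exact: (congr1 tag eq_pq).
Qed.

Definition incid (z : E) (x : Vx) : C := (evtx z == x)%:R.

Definition uv (a : {set V}) (x y : Vx) : C := u a (tag y) (tag x) (tagged x) (tagged y).
Definition wv (a : {set V}) (x y : Vx) : C := wblk u a (tagged x) (tagged y).

(* The block-diagonal matrix diag(U_a)_(a in F), on the edge coordinates. *)
Definition Ublk (x z : E) : C :=
  if esrc x == esrc z then
    if etgt x == etgt z then (evtx x == evtx z)%:R else uv (esrc x) (evtx x) (evtx z)
  else 0.

Definition Wblk (z w : E) : C :=
  if esrc z == esrc w then wv (esrc z) (evtx z) (evtx w) else 0.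

Definition Uoff (x z : E) : C :=
  if (esrc z == esrc x) && (etgt z != etgt x) then uv (esrc x) (evtx x) (evtx z) else 0.

Lemma UoffE (x z : E) : Uoff x z = Ublk x z - (x == z)%:R.
Proof.
rewrite /Uoff /Ublk [esrc z == _]eq_sym [etgt z == _]eq_sym.
have [eq_src|ne_src] := eqVneq (esrc x) (esrc z); last first.
  by case: (x =P z) => [xz|]; [move: ne_src; rewrite xz eqxx | rewrite subr0].
have [eq_tgt|ne_tgt] := eqVneq (etgt x) (etgt z) => /=; last first.
  by case: (x =P z) => [xz|]; [move: ne_tgt; rewrite xz eqxx | rewrite subr0].
have [eq_vtx|ne_vtx] := eqVneq (evtx x) (evtx z).
  by rewrite (Eidx_eq eq_src eq_vtx) eqxx subrr.
by case: (x =P z) => [xz|]; [move: ne_vtx; rewrite xz eqxx | rewrite subrr].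
Qed.

Lemma incid_mul_tr (z y : E) : \sum_w incid z w * incid y w = (evtx z == evtx y)%:R.
Proof. by rewrite /incid sum_delta eq_sym. Qed.

Lemma Uoff_mul_incid (x y : E) :
  \sum_z Uoff x z * (evtx z == evtx y)%:R
    = (etgt y \in esrc x)%:R *
      (if etgt y != etgt x then uv (esrc x) (evtx x) (evtx y) else 0).
Proof.
set c := (if _ then _ else _); rewrite sum_Eidx.
have fiberE (e : D) : \sum_(p : 'I_(r (tgt e)))
    Uoff x (Tagged _ p) * (evtx (Tagged (fun e => 'I_(r (tgt e))) p) == evtx y)%:R
    = (tgt e == etgt y)%:R * ((src e == esrc x)%:R * c).
  under eq_bigr do rewrite mulrC; apply: sum_delta_Vidx => p eq_vtx.
  have eq_tgt : tgt e = etgt y := congr1 tag eq_vtx.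
  rewrite /Uoff /c /esrc /etgt /=; rewrite /evtx /= in eq_vtx *; rewrite eq_vtx eq_tgt.
  by case: (src e == _); rewrite ?mul1r ?mul0r //=; case: (_ != _).
under eq_bigr do rewrite fiberE mulrA.
by rewrite -big_distrl /= sum_dedge_src_tgt ?src_in_F.
Qed.

Lemma Mop_factor (x y : E) :
  Mop u x y = \sum_z (Ublk x z - (x == z)%:R) * (\sum_w incid z w * incid y w - (z == y)%:R).
Proof.
under eq_bigr do rewrite -UoffE incid_mul_tr mulrBr.
rewrite sumrB Uoff_mul_incid.
under [X in _ - X]eq_bigr do rewrite mulrC eq_sym.
rewrite sum_delta /Mop /follows /Uoff -/(esrc x) -/(esrc y) -/(etgt x) -/(etgt y).
rewrite -[u _ _ _ _ _]/(uv (esrc x) (evtx x) (evtx y)).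
have := tgt_in_src (tag y); rewrite -/(esrc y) -/(etgt y).
have [->|ne_src] := eqVneq (esrc y) (esrc x) => [-> /=|_].
  by rewrite andbF mul1r; case: (_ != _); rewrite subrr.
by rewrite andbT subr0; case: (etgt y \in esrc x); case: (_ != _); rewrite ?mul1r ?mul0r.
Qed.

Lemma sum_incid (x : Vx) : \sum_(z : E) incid z x = (vdeg F (tag x))%:R.
Proof.
rewrite sum_Eidx -card_dedge_tgt -sum1_card natr_sum [RHS]big_mkcond /=.
apply: eq_bigr => e _; rewrite inE.
transitivity ((tgt e == tag x)%:R * 1 : C); last by rewrite mulr1; case: (_ == _).
rewrite -(@sum_delta_Vidx _ x (fun _ => 1)) //.
by apply: eq_bigr => p _; rewrite mulr1.
Qed.

Lemma Dop_incid (x y : Vx) : \sum_z incid z x * incid z y = Dop F R x y.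
Proof.
rewrite /Dop; have [<-|ne_xy] := eqVneq x y.
  under eq_bigr do rewrite -natrM mulnb andbb.
  by rewrite sum_incid mul1r.
rewrite mul0r big1 // => z _; rewrite /incid.
case: (evtx z =P x) => [zx|_]; last by rewrite mul0r.
case: (evtx z =P y) => [zy|_]; last by rewrite mulr0.
by move: ne_xy; rewrite -zx -zy eqxx.
Qed.

Lemma Wop_incid (x y : Vx) :
  \sum_z incid z x * (\sum_w Wblk z w * incid w y) = Wop F u x y.
Proof.
pose G (z : E) := \sum_(e' : D) (tgt e' == tag y)%:R *
                   ((esrc z == src e')%:R * wv (esrc z) (evtx z) y).
have WblkE z : \sum_w Wblk z w * incid w y = G z.
  rewrite sum_Eidx /G; apply: eq_bigr => e' _.
  under eq_bigr do rewrite mulrC.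
  apply: sum_delta_Vidx => q eq_vtx.
  rewrite /Wblk /esrc /=; rewrite /evtx /= in eq_vtx *; rewrite eq_vtx.
  by case: (_ == _); rewrite ?mul1r ?mul0r.
under eq_bigr do rewrite WblkE.
rewrite sum_Eidx /Wop (big_mkcond (fun e : D => tgt e == tag x)) /=.
apply: eq_bigr => e _.
transitivity ((tgt e == tag x)%:R *
   (\sum_(e' : D) (tgt e' == tag y)%:R * ((src e == src e')%:R * wv (src e) x y))).
  apply: sum_delta_Vidx => p eq_vtx.
  by rewrite /G /esrc /=; rewrite /evtx /= in eq_vtx *; rewrite eq_vtx.
case: (tgt e == tag x); rewrite ?mul1r ?mul0r //.
rewrite [RHS]big_mkcond /=; apply: eq_bigr => e' _; rewrite [src e' == _]eq_sym.
by case: (src e == src e'); case: (tgt e' == tag y); rewrite /= ?mul1r ?mul0r ?mulr0.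
Qed.

Lemma Vidx_eqE (x y : Vx) : tag x = tag y -> (x == y) = (val (tagged x) == val (tagged y)).
Proof. by case: x y => i p [j q] /= eq_ij; subst j; rewrite eq_Tagged. Qed.

Definition Eidx_of_Aidx (a : {set V}) (aF : a \in F) (x : Aidx r a) : E :=
  Tagged (fun e : D => 'I_(r (tgt e)))
    (i := exist _ (a, tag (val x))
            (introT andP (conj aF (valP x)) : dedgeP F (a, tag (val x))))
    (tagged (val x)).

Section EdgesOfFace.
Variables (a : {set V}) (aF : a \in F).
Local Notation emb := (Eidx_of_Aidx aF).

Lemma esrc_emb x : esrc (emb x) = a.
Proof. by []. Qed.

Lemma evtx_emb x : evtx (emb x) = val x.
Proof. by case: x => -[i p]. Qed.

Lemma emb_inj : injective emb.
Proof. by move=> x y /(congr1 evtx); rewrite !evtx_emb => /val_inj. Qed.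

Lemma emb_onto (z : E) : esrc z = a -> exists x, z = emb x.
Proof.
move=> za; have ia : tag (evtx z) \in a by rewrite -za; exact: tgt_in_src.
exists (exist _ (evtx z) ia); apply: Eidx_eq; first by rewrite za.
by rewrite evtx_emb.
Qed.

Lemma Ublk_emb x y : Ublk (emb x) (emb y) = Umx u a (enum_rank x) (enum_rank y).
Proof.
rewrite /Ublk /Umx /fmx mxE !enum_rankK /Uop !esrc_emb eqxx /etgt /=.
by case: eqP => // eq_tgt; rewrite Vidx_eqE !evtx_emb.
Qed.

Lemma Wblk_emb x y : Wblk (emb x) (emb y) = invmx (Umx u a) (enum_rank x) (enum_rank y).
Proof.
rewrite /Wblk !esrc_emb eqxx !evtx_emb.
by case: x y => -[i p] ip [[j q] jq]; rewrite /wv /wblk /= !insubT.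
Qed.

End EdgesOfFace.

Lemma fdet_Ublk : fdet Ublk = \prod_(a in F) \det (Umx u a).
Proof.
rewrite fdet_det_on (_ : [set: E] = esrc @^-1: F); last first.
  by apply/setP => z; rewrite !inE src_in_F.
rewrite (det_on_blockdiag (c := esrc)); last by move=> x y; rewrite /Ublk => /negbTE ->.
apply: eq_bigr => a aF.
rewrite (@det_on_enum _ _ _ _ _ (fun k : 'I_#|Aidx r a| => Eidx_of_Aidx aF (enum_val k))).
- by congr (\det _); apply/matrixP => i j; rewrite [LHS]mxE Ublk_emb !enum_valK.
- by move=> i j /emb_inj /enum_val_inj.
- by move=> i; rewrite !inE esrc_emb.
- move=> z; rewrite !inE => /eqP /(emb_onto aF) [x ->].
  by exists (enum_rank x); rewrite enum_rankK.
Qed.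

Lemma Ublk_mul_Wblk (HU : forall a, a \in F -> Umx u a \in unitmx) (x y : E) :
  \sum_z Ublk x z * Wblk z y = (x == y)%:R.
Proof.
pose a := esrc x; have aF : a \in F := src_in_F (tag x).
have [x1 ->] := emb_onto aF (erefl a).
rewrite (bigID (fun z => esrc z == a)) /= [X in _ + X]big1 ?addr0; last first.
  by move=> z ne_za; rewrite /Ublk esrc_emb eq_sym (negbTE ne_za) mul0r.
rewrite (@sum_reindex_onto _ _ _ _ (Eidx_of_Aidx aF)); first last.
- by move=> z /eqP /(emb_onto aF).
- by move=> k; rewrite esrc_emb.
- exact: emb_inj.
have [ya|ne_ya] := eqVneq (esrc y) a; last first.
  rewrite big1; last by move=> k _; rewrite /Wblk esrc_emb eq_sym (negbTE ne_ya) mulr0.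
  by case: eqP => // eq_y; move: ne_ya; rewrite -eq_y esrc_emb eqxx.
have [y1 ->] := emb_onto aF ya.
under eq_bigr do rewrite Ublk_emb Wblk_emb.
rewrite (inj_eq (emb_inj (aF := aF))) -(inj_eq enum_rank_inj).
have := mulmxV (HU a aF) => /matrixP /(_ (enum_rank x1) (enum_rank y1)).
rewrite !mxE => <-; rewrite (big_enum_val (A := Aidx r a)) /=.
by under eq_bigr do rewrite enum_valK.
Qed.

End Hypergraph.

Theorem theorem3 (V : finType) (F : {set {set V}})
  (HF : forall a : {set V}, a \in F -> a != set0)
  (R : realType) (r : V -> nat) (Hr : forall k : V, (0 < r k)%N)
  (u : forall (a : {set V}) (k l : V), 'M[R[i]]_(r l, r k))
  (HU : forall a : {set V}, a \in F -> Umx u a \in unitmx) :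
  fdet (fun x y : Eidx F r => idmx_op R x y - Mop (F:=F) u x y)
  = fdet (fun x y : Vidx r => idmx_op R x y - Dop F R x y + Wop F u x y)
    * \prod_(a in F) \det (Umx u a).
Proof.
pose U := fmxr (Ublk (F:=F) u); pose W := fmxr (Wblk (F:=F) u).
pose S := fmxr (@incid V F R r).
have UW1 : U *m W = 1%:M.
  by rewrite -fmxr_mulmx -fmxr_delta; apply: eq_fmxr; exact: Ublk_mul_Wblk.
have ME : fmxr (Mop u) = (U - 1%:M) *m (S *m S^T - 1%:M).
  rewrite -fmxr_tr -!fmxr_delta -!fmxrB -!fmxr_mulmx -fmxrB -fmxr_mulmx.
  by apply: eq_fmxr => x y; rewrite Mop_factor.
have DE : fmxr (Dop F R (r:=r)) = S^T *m S.
  by rewrite -fmxr_tr -fmxr_mulmx; apply: eq_fmxr => x y; rewrite Dop_incid.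
have WE : fmxr (Wop F u) = S^T *m (W *m S).
  by rewrite -fmxr_tr -!fmxr_mulmx; apply: eq_fmxr => x y; rewrite Wop_incid.
rewrite -fdet_Ublk !fdetE !fmxrB fmxrD fmxrB !fmxr_delta ME DE WE.
exact: det_1B_mulmx_factor.
Qed.
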